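(* Let $d\ge 2$, let $\mathbb{F}_q$ be a finite field of odd characteristic, and let $S_j=\{x\in\mathbb{F}_q^d : Q(x)=j\}$ with $j\in\mathbb{F}_q^*$ and $Q$ a non-degenerate quadratic form over $\mathbb{F}_q$. Then \[R^*(2\rightarrow 4)\lesssim 1.\]
   Context: $\chi$ is a fixed non-trivial additive character of $\mathbb{F}_q$. A quadratic form $Q(x)=\sum_{i,k=1}^d a_{ik}x_ix_k$ with $a_{ik}=a_{ki}\in\mathbb{F}_q$ is non-degenerate if the matrix $(a_{ik})$ is invertible. For $f:S_j\to\mathbb{C}$ and $m\in\mathbb{F}_q^d$, $\widehat{fd\sigma}(m)=\frac{1}{\#S_j}\sum_{x\in S_j}\chi(-x\cdot m)f(x)$. Norms: $\|g\|_{L^r(\mathbb{F}_q^d,dm)}=\big(\sum_{m\in\mathbb{F}_q^d}|g(m)|^r\big)^{1/r}$ and $\|f\|_{L^p(S_j,d\sigma)}=\big(\frac{1}{\#S_j}\sum_{x\in S_j}|f(x)|^p\big)^{1/p}$. $R^*(p\rightarrow r)$ denotes the best constant such that $\|\widehat{fd\sigma}\|_{L^r(\mathbb{F}_q^d,dm)}\le R^*(p\rightarrow r)\|f\|_{L^p(S_j,d\sigma)}$ for all $f:S_j\to\mathbb{C}$. $X\lesssim Y$ means $X\le CY$ for a constant $C$ independent of $q$. *)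

From HB Require Import structures.
From mathcomp Require Import all_boot all_order all_algebra all_field.
Set Implicit Arguments. Unset Strict Implicit. Unset Printing Implicit Defensive.
Import Order.TTheory GRing.Theory Num.Theory.
Local Open Scope ring_scope.

Definition additive_character (F : finFieldType) (chi : F -> algC) : Prop :=
  (forall x y : F, chi (x + y) = chi x * chi y) /\ chi 0 = 1.

Definition nontrivial_character (F : finFieldType) (chi : F -> algC) : Prop :=
  exists x : F, chi x != 1.

Definition dotv (F : finFieldType) (d : nat) (x m : 'rV[F]_d) : F :=
  \sum_(i < d) x 0 i * m 0 i.

Definition qform (F : finFieldType) (d : nat) (A : 'M[F]_d) (x : 'rV[F]_d) : F :=
  \sum_(i < d) \sum_(k < d) A i k * x 0 i * x 0 k.

Definition nondeg_sym (F : finFieldType) (d : nat) (A : 'M[F]_d) : Prop :=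
  A^T = A /\ A \in unitmx.

Definition Sj (F : finFieldType) (d : nat) (A : 'M[F]_d) (j : F) : {set 'rV[F]_d} :=
  [set x | qform A x == j].

Definition ext_op (F : finFieldType) (d : nat) (chi : F -> algC)
    (S : {set 'rV[F]_d}) (f : 'rV[F]_d -> algC) (m : 'rV[F]_d) : algC :=
  (#|S|%:R)^-1 * \sum_(x in S) chi (- dotv x m) * f x.

Definition Lnorm_dm (F : finFieldType) (d r : nat) (g : 'rV[F]_d -> algC) : algC :=
  r.-root (\sum_(m : 'rV[F]_d) `|g m| ^+ r).

Definition Lnorm_ds (F : finFieldType) (d p : nat) (S : {set 'rV[F]_d})
    (f : 'rV[F]_d -> algC) : algC :=
  p.-root ((#|S|%:R)^-1 * \sum_(x in S) `|f x| ^+ p).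

From HB Require Import structures.
From mathcomp Require Import all_boot all_order all_algebra all_field.
From mathcomp Require Import ring zify.
Import Order.TTheory GRing.Theory Num.Theory.
Set Implicit Arguments. Unset Strict Implicit. Unset Printing Implicit Defensive.
Local Open Scope ring_scope.

(* Squaring the extension operator turns the L^4 estimate into an L^2 one:
   (f dsigma)^ squared is the Fourier transform of the autoconvolution
   h(a) = sum_{x, a - x in S} f(x) f(a - x), so by Plancherel
   ||(f dsigma)^||_4^4 = q^d |S|^-4 sum_a |h(a)|^2.  Symmetry of S bounds
   |h(0)| by ||f||^2, and for a <> 0 Cauchy-Schwarz bounds |h(a)|^2 by the
   number of x in S with a - x in S times a weighted sum whose total is
   ||f||^4.  That number is at most 2 q^(d-2): such x lie on the hyperplane
   B(a, x) = Q(a)/2, and each line in that hyperplane with an anisotropic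
   direction meets S at most twice.  Finally |S| >= q^(d-1) / 3, by counting
   second intersections of lines through a point of S.  Altogether
   ||(f dsigma)^||_4 <= 27^(1/4) ||f||_{L^2(S, dsigma)}. *)

Section DotProduct.

Variables (F : finFieldType) (d : nat).
Implicit Types x y m : 'rV[F]_d.

Lemma dotvDl x y m : dotv (x + y) m = dotv x m + dotv y m.
Proof. by rewrite /dotv -big_split; apply: eq_bigr => i _; rewrite mxE mulrDl. Qed.

Lemma dotvDr x y m : dotv m (x + y) = dotv m x + dotv m y.
Proof. by rewrite /dotv -big_split; apply: eq_bigr => i _; rewrite mxE mulrDr. Qed.

Lemma dotvZl t x m : dotv (t *: x) m = t * dotv x m.
Proof. by rewrite /dotv mulr_sumr; apply: eq_bigr => i _; rewrite mxE mulrA. Qed.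

Lemma dotvZr t x m : dotv m (t *: x) = t * dotv m x.
Proof. by rewrite /dotv mulr_sumr; apply: eq_bigr => i _; rewrite mxE mulrCA. Qed.

Lemma dotvNl x m : dotv (- x) m = - dotv x m.
Proof. by rewrite -scaleN1r dotvZl mulN1r. Qed.

Lemma dotv0l m : dotv 0 m = 0.
Proof. by rewrite -(scale0r 0) dotvZl mul0r. Qed.

Lemma dotv_delta x i : dotv x (delta_mx 0 i) = x 0 i.
Proof.
rewrite /dotv (bigD1 i) //= big1 ?addr0; first by rewrite mxE !eqxx mulr1.
by move=> k hk; rewrite mxE (negbTE hk) andbF mulr0.
Qed.

Lemma row_neq0P x : reflect (exists i, x 0 i != 0) (x != 0).
Proof.
apply: (iffP idP) => [nz | [i]]; last by apply: contra => /eqP ->; rewrite mxE.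
apply/existsP; apply: contraNT nz => /existsPn x0.
by apply/eqP/rowP => i; rewrite mxE; apply/eqP/negbNE.
Qed.

(* A linear form [y |-> dotv b y] with [b != 0] is onto, so its level sets
   are translates of one another. *)
Lemma card_dotv_level (b : 'rV[F]_d) (t : F) : b != 0 ->
  (#|[set x | dotv b x == t]| * #|F| = #|{: 'rV[F]_d}|)%N.
Proof.
case/row_neq0P => i hi.
pose v := (b 0 i)^-1 *: (delta_mx 0 i : 'rV[F]_d).
have hv : dotv b v = 1 by rewrite dotvZr dotv_delta mulVf.
have level_card s : #|[set x | dotv b x == s]| = #|[set x | dotv b x == 0]|.
  rewrite -(card_imset [set x | dotv b x == 0] (addIr (s *: v))).
  apply: eq_card => x; rewrite inE; apply/eqP/imsetP => [hx | [y]]; last first.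
    by rewrite inE => /eqP hy ->; rewrite dotvDr dotvZr hv hy add0r mulr1.
  exists (x - s *: v); last by rewrite subrK.
  by rewrite inE dotvDr -scaleNr dotvZr hv hx mulr1 subrr.
have -> : #|{: 'rV[F]_d}| = (\sum_(s : F) #|[set x | dotv b x == s]|)%N.
  rewrite -sum1_card (partition_big (dotv b) predT) //=; apply: eq_bigr => s _.
  by rewrite -sum1_card; apply: eq_bigl => x; rewrite inE.
by rewrite (eq_bigr _ (fun s _ => level_card s)) sum_nat_const mulnC level_card.
Qed.

End DotProduct.

Section BilinearForm.

Variables (F : finFieldType) (d : nat) (A : 'M[F]_d).
Implicit Types x y z : 'rV[F]_d.

Definition bform x y : F := \sum_(i < d) \sum_(k < d) A i k * x 0 i * y 0 k.

Lemma qformE x : qform A x = bform x x.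
Proof. by []. Qed.

Lemma bform_dotv x y : bform x y = dotv (x *m A) y.
Proof.
rewrite /bform /dotv exchange_big /=; apply: eq_bigr => k _.
by rewrite mxE mulr_suml; apply: eq_bigr => i _; rewrite (mulrC (A i k)).
Qed.

Lemma bformDl x y z : bform (x + y) z = bform x z + bform y z.
Proof.
rewrite /bform -big_split; apply: eq_bigr => i _; rewrite -big_split.
by apply: eq_bigr => k _; rewrite mxE mulrDr mulrDl.
Qed.

Lemma bformDr x y z : bform x (y + z) = bform x y + bform x z.
Proof. by rewrite !bform_dotv dotvDr. Qed.

Lemma bformZl t x y : bform (t *: x) y = t * bform x y.
Proof.
rewrite /bform mulr_sumr; apply: eq_bigr => i _; rewrite mulr_sumr.
by apply: eq_bigr => k _; rewrite mxE mulrCA !mulrA.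
Qed.

Lemma bformZr t x y : bform x (t *: y) = t * bform x y.
Proof. by rewrite !bform_dotv dotvZr. Qed.

Lemma bformNr x y : bform x (- y) = - bform x y.
Proof. by rewrite -scaleN1r bformZr mulN1r. Qed.

Lemma qform0 : qform A 0 = 0.
Proof. by rewrite qformE -(scale0r 0) bformZl mul0r. Qed.

Lemma qformZ t x : qform A (t *: x) = t ^+ 2 * qform A x.
Proof. by rewrite !qformE bformZl bformZr mulrA expr2. Qed.

Lemma qformN x : qform A (- x) = qform A x.
Proof. by rewrite -scaleN1r qformZ sqrrN expr1n mul1r. Qed.

Hypothesis symA : A^T = A.

Lemma bformC x y : bform x y = bform y x.
Proof.
rewrite /bform exchange_big /=; apply: eq_bigr => i _; apply: eq_bigr => k _.
by rewrite -{1}symA mxE mulrAC.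
Qed.

Lemma qformD x y : qform A (x + y) = qform A x + 2 * bform x y + qform A y.
Proof. by rewrite !qformE bformDl !bformDr (bformC y x); ring. Qed.

Lemma bform_polar x y : (2 : F) != 0 ->
  bform x y = (qform A (x + y) - qform A x - qform A y) / 2.
Proof. by move=> h2; rewrite qformD; field. Qed.

End BilinearForm.

Section Counting.

Variable F : finFieldType.

Lemma card_by_lines d (u : 'rV[F]_d) (P D : {set 'rV[F]_d}) :
  (forall v, #|[set t : F | (v + t *: u)%R \in P]| <= 2)%N ->
  (forall v t, v + t *: u \in P -> v \in D) ->
  (#|F| * #|P| <= 2 * #|D|)%N.
Proof.
move=> line_le2 lineD.
have -> : (#|F| * #|P| = \sum_v #|[set t : F | (v + t *: u)%R \in P]|)%N.
  rewrite -sum_nat_const /= (eq_bigr (fun t => #|[set v : 'rV[F]_d | v + t *: u \in P]|)); last first.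
    by move=> t _; rewrite -(card_preimset P (addIr (t *: u))); apply: eq_card => v; rewrite !inE.
  under eq_bigr do rewrite -sum1_card big_mkcond /=.
  rewrite exchange_big /=; apply: eq_bigr => v _.
  by rewrite -sum1_card [RHS]big_mkcond; apply: eq_bigr => t _; rewrite !inE.
rewrite -sum1_card big_distrr [X in (_ <= X)%N]big_mkcond; apply: leq_sum => v _ /=.
case: ifP => [_ | vD]; first by rewrite muln1 line_le2.
rewrite leqn0 cards_eq0; apply/eqP/setP => t; rewrite !inE.
by apply/negP => /lineD; rewrite vD.
Qed.

Lemma card_quadratic_roots (a b c : F) : a != 0 ->
  (#|[set t : F | (a * t ^+ 2 + b * t + c == 0)%R]| <= 2)%N.
Proof.
move=> a0.
have [-> | [t1]] := set_0Vmem [set t : F | a * t ^+ 2 + b * t + c == 0].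
  by rewrite cards0.
rewrite inE => /eqP root_t1.
apply: (@leq_trans #|[set t1; (- (b / a) - t1)%R]|); last first.
  by rewrite cards2; case: (_ != _).
apply/subset_leq_card/subsetP => t; rewrite !inE => /eqP root_t.
have [-> // | t_neq_t1] := eqVneq t t1; apply/eqP.
(* Vieta: the two roots of [a X^2 + b X + c] sum to [- b / a]. *)
have : (t - t1) * (a * (t + t1) + b) = 0.
  transitivity ((a * t ^+ 2 + b * t + c) - (a * t1 ^+ 2 + b * t1 + c)); first by ring.
  by rewrite root_t root_t1 subrr.
move/eqP; rewrite mulf_eq0 subr_eq0 (negbTE t_neq_t1) /= => /eqP sum0.
have -> : t = (a * (t + t1) + b) / a - b / a - t1 by field.
by rewrite sum0 mul0r sub0r.
Qed.

Lemma card_le_fibers (T U : finType) (f : T -> U) (X : {set T}) k :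
  (forall y, #|[set x in X | f x == y]| <= k)%N -> (#|X| <= k * #|f @: X|)%N.
Proof.
move=> fiber_le; rewrite -sum1_card (partition_big f (mem (f @: X))) /=; last first.
  by move=> x xX; apply: imset_f.
rewrite mulnC -sum_nat_const leq_sum // => y _.
apply: leq_trans (fiber_le y); rewrite -sum1_card.
by apply/eq_leq/eq_bigl => x; rewrite !inE.
Qed.

Lemma card_squares : (#|F| < 2 * #|[set t ^+ 2 | t : F]|)%N.
Proof.
set Sq := [set t ^+ 2 | t : F].
have Sq0 : (0 : F) \in Sq by apply/imsetP; exists 0; rewrite ?expr0n.
have -> : #|F| = (\sum_(y in Sq) #|[set x : F | (x ^+ 2 == y)%R]|)%N.
  rewrite -sum1_card (partition_big (fun t : F => t ^+ 2) (mem Sq)) /=; last first.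
    by move=> t _; apply: imset_f.
  by apply: eq_bigr => y _; rewrite -sum1_card; apply: eq_bigl => x; rewrite inE.
rewrite (bigD1 0) //= (cardsD1 0 Sq) Sq0 mulnDr muln1 -addSn.
apply: leq_add.
  rewrite ltnS -(cards1 (0 : F)); apply/subset_leq_card/subsetP => x.
  by rewrite !inE expf_eq0.
rewrite mulnC -sum_nat_const (eq_bigl (mem (Sq :\ 0))) => [|y]; last first.
  by rewrite !inE andbC.
apply: leq_sum => y _; apply: leq_trans (card_quadratic_roots 0 (- y) (oner_neq0 F)).
by apply/subset_leq_card/subsetP => x; rewrite !inE mul1r mul0r addr0 subr_eq0.
Qed.

Lemma card_ge3 : (2 : F) != 0 -> (3 <= #|F|)%N.
Proof.
move=> h2; apply/card_gt2P; exists 0, 1, 2; split=> //.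
split; [by rewrite eq_sym oner_eq0 | | exact: h2].
by rewrite -subr_eq0 mulr2n opprD addrA subrr sub0r oppr_eq0 oner_eq0.
Qed.

End Counting.

Lemma sphere_count_arith (q n g z h : nat) : (3 <= q)%N ->
  (h * q = g + z + h)%N -> (q * z <= 2 * (g + z))%N -> (g <= q.-1 * n)%N ->
  (g + z + h <= 3 * q * n)%N.
Proof.
case: q => [|[|[|r]]] // _ cardH cardZ cardG; rewrite /= in cardG.
have z_le : ((r + 1) * z <= 2 * g)%N by nia.
have sum_le : ((r + 1) * (g + z + h) <= (r + 3) * (r + 3) * n)%N by nia.
nia.
Qed.

Section NondegenerateForm.

Variables (F : finFieldType) (d : nat) (A : 'M[F]_d).
Hypotheses (symA : A^T = A) (unitA : A \in unitmx) (two_neq0 : (2 : F) != 0).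
Implicit Types u v w x y z : 'rV[F]_d.

Local Notation Q := (qform A).
Local Notation B := (bform A).

Lemma bform_nondeg z : (forall y, B z y = 0) -> z = 0.
Proof.
move=> zB; apply/eqP; rewrite -(mulmx_free_eq0 z (_ : row_free A)) ?row_free_unit //.
by apply/eqP/rowP => i; rewrite [RHS]mxE -dotv_delta -bform_dotv zB.
Qed.

Lemma card_bform_level w c : w != 0 ->
  (#|[set x | (B w x == c)%R]| * #|F| = #|{: 'rV[F]_d}|)%N.
Proof.
move=> w0; rewrite -(card_dotv_level c (_ : w *m A != 0)) ?mulmx_free_eq0 ?row_free_unit //.
by congr (_ * _)%N; apply: eq_card => x; rewrite !inE bform_dotv.
Qed.

Lemma exists_orthogonal w : (2 <= d)%N -> w != 0 -> exists2 z, z != 0 & B w z = 0.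
Proof.
move=> d_ge2 w0.
have q_gt1 : (1 < #|F|)%N by apply/card_gt1P; exists 0, 1; rewrite eq_sym oner_eq0.
have : (1 < #|[set x | (B w x == 0)%R]|)%N.
  rewrite -(@ltn_pmul2r #|F|) ?(ltnW q_gt1) // card_bform_level // card_mx mul1n.
  by rewrite mul1n -[X in (X < _)%N]expn1 ltn_exp2l.
case/card_gt1P => x [y [+ + xy]]; rewrite !inE => /eqP wx /eqP wy.
have [x0 | x0] := eqVneq x 0; last by exists x.
by exists y => //; rewrite -x0 eq_sym.
Qed.

Lemma exists_anisotropic : (0 < d)%N -> exists u, Q u != 0.
Proof.
move=> d_gt0; apply/existsP; apply: contraT => /existsPn iso.
have all0 z : z = 0.
  apply: bform_nondeg => y; rewrite bform_polar //.
  by rewrite !(eqP (negbNE (iso _))) !subr0 mul0r.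
by move/rowP/(_ (Ordinal d_gt0)): (all0 (const_mx 1)); rewrite !mxE => /eqP; rewrite oner_eq0.
Qed.

Lemma orthogonal_anisotropicVisotropic w :
  (exists2 u, B w u = 0 & Q u != 0) \/ (forall u, B w u = 0 -> Q u = 0).
Proof.
have [u /andP[/eqP wu Qu] | iso] := pickP [pred u | (B w u == 0) && (Q u != 0)].
  by left; exists u.
by right=> u wu; move: (iso u); rewrite /= wu eqxx /= => /negbFE/eqP.
Qed.

(* If [w^perp] were totally isotropic, polarization would put every [z] in
   [w^perp] in the radical of [B]: decompose [v] along [w] and [w^perp]. *)
Lemma exists_anisotropic_orthogonal w : (2 <= d)%N -> Q w != 0 ->
  exists2 u, B w u = 0 & Q u != 0.
Proof.
move=> d_ge2 Qw.
have w0 : w != 0 by apply: contraNneq Qw => ->; rewrite qform0.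
have [// | iso] := orthogonal_anisotropicVisotropic w.
have [z z0 wz] := exists_orthogonal d_ge2 w0.
case/negP: z0; apply/eqP/bform_nondeg => v.
pose v' := v - (B w v / Q w) *: w.
have wv' : B w v' = 0 by rewrite bformDr bformNr bformZr -qformE mulfVK // subrr.
have -> : v = v' + (B w v / Q w) *: w by rewrite subrK.
rewrite bformDr bformZr (bformC symA z w) wz mulr0 addr0.
by rewrite bform_polar // !iso ?subrr ?mul0r // bformDr wz wv' addr0.
Qed.

(* [Q] takes every value on the plane spanned by two orthogonal anisotropic
   vectors: [Q u1 * s + Q u2 * s'] ranges over a sum of two sets of squares,
   each of size more than [q / 2]. *)
Lemma qform_onto c : (2 <= d)%N -> exists p, Q p = c.
Proof.
move=> d_ge2.
have [u1 Qu1] := exists_anisotropic (ltnW d_ge2).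
have [u2 u12 Qu2] := exists_anisotropic_orthogonal d_ge2 Qu1.
set Sq := [set t ^+ 2 | t : F].
set X := [set Q u1 * s | s in Sq].
set Y := [set c - Q u2 * s | s in Sq].
have cardX : #|X| = #|Sq| by apply/card_imset/mulfI.
have cardY : #|Y| = #|Sq|.
  by apply: card_imset => s s' /addrI/oppr_inj/(mulfI Qu2).
have : (0 < #|X :&: Y|)%N.
  have := cardsUI X Y; have := card_squares F; have := max_card (mem (X :|: Y)).
  rewrite cardX cardY -/Sq; move: #|_ :|: _| #|X :&: Y| #|Sq| #|F| => ? ? ? ?; lia.
case/card_gt0P => y; rewrite inE => /andP[/imsetP[s1 /imsetP[t1 _ ->] ->]].
case/imsetP=> s2 /imsetP[t2 _ ->] e.
exists (t1 *: u1 + t2 *: u2).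
by rewrite qformD // !qformZ bformZl bformZr u12 !mulr0 addr0 mulrC e [_ * Q u2]mulrC subrK.
Qed.

Lemma card_line_level u v c : Q u != 0 ->
  (#|[set t : F | Q (v + t *: u) == c]| <= 2)%N.
Proof.
move=> Qu; apply: leq_trans (card_quadratic_roots (2 * B v u) (Q v - c) Qu).
apply/subset_leq_card/subsetP => t; rewrite !inE qformD // qformZ bformZr.
by move=> /eqP <-; apply/eqP; ring.
Qed.

Variable j : F.
Hypotheses (d_ge2 : (2 <= d)%N) (j_neq0 : j != 0).

Local Notation S := (Sj A j).
Local Notation N := #|{: 'rV[F]_d}|.

(* If [x] and [a - x] both lie on [S], then [x] lies on the affine hyperplane
   [B a x = Q a / 2]; along lines in a direction orthogonal to [a] it meets
   [S] at most twice. *)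
Lemma card_sphere_pairs a : a != 0 ->
  (#|F| ^ 2 * #|[set x in S | (a - x)%R \in S]| <= 2 * N)%N.
Proof.
move=> a0; set P := [set x in S | a - x \in S].
have P_plane x : x \in P -> B a x = Q a / 2.
  rewrite !inE => /andP[/eqP Qx /eqP]; rewrite qformD // qformN bformNr Qx.
  move=> /(canRL (addrK j)); rewrite subrr mulrN => /eqP; rewrite subr_eq0 => /eqP ->.
  by field.
have [[u au Qu] | iso] := orthogonal_anisotropicVisotropic a.
  set D := [set x | (B a x == Q a / 2)%R].
  have PD : (#|F| * #|P| <= 2 * #|D|)%N.
    apply: (card_by_lines (u := u)) => [v | v t /P_plane].
      apply: leq_trans (card_line_level v j Qu); apply/subset_leq_card/subsetP => t.
      by rewrite !inE => /andP[].
    by rewrite inE bformDr bformZr au mulr0 addr0 => ->.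
  rewrite -(card_bform_level (Q a / 2) a0).
  by rewrite expnS expn1 -mulnA (mulnC #|D|) [X in (_ <= X)%N]mulnCA leq_mul2l PD orbT.
have Qa : Q a = 0.
  apply: contraTeq isT => Qa; have [u au Qu] := exists_anisotropic_orthogonal d_ge2 Qa.
  by rewrite (iso u au) eqxx in Qu.
suff -> : P = set0 by rewrite cards0 muln0.
apply/setP => x; rewrite in_set0; apply: contraTF j_neq0 => Px; rewrite negbK.
move: (P_plane x Px); rewrite Qa mul0r => /iso <-.
by move: Px; rewrite !inE => /andP[/eqP ->].
Qed.

(* The second point where the line through [p] with direction [v] meets the
   level set of [Q] through [p]. *)
Definition secant p v := p + (- (2 * B p v) / Q v) *: v.

Definition secant_dom p := [set v | (Q v != 0) && (B p v != 0)].

Lemma qform_secant p v : Q v != 0 -> Q (secant p v) = Q p.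
Proof. by move=> Qv; rewrite qformD // qformZ bformZr; field. Qed.

Lemma card_secant_fiber p y :
  (#|[set v in secant_dom p | secant p v == y]| <= #|F|.-1)%N.
Proof.
set X := [set v in _ | _].
have [-> | [v0]] := set_0Vmem X; first by rewrite cards0.
have scale_neq0 v : v \in secant_dom p -> - (2 * B p v) / Q v != 0.
  by rewrite inE => /andP[Qv pv]; rewrite mulf_neq0 ?invr_neq0 ?oppr_eq0 ?mulf_neq0.
rewrite inE => /andP[v0_dom /eqP v0y]; have s0 := scale_neq0 _ v0_dom.
rewrite -(cardC1 (0 : F)); apply: leq_trans (leq_imset_card (fun s => s *: v0) _).
apply/subset_leq_card/subsetP => v; rewrite inE => /andP[v_dom /eqP vy].
have s := scale_neq0 _ v_dom.
apply/imsetP; exists ((- (2 * B p v0) / Q v0) / (- (2 * B p v) / Q v)).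
  by rewrite inE mulf_neq0 ?invr_neq0.
apply: (scalerI s); rewrite scalerA mulrCA mulfV // mulr1; apply: (addrI p).
by rewrite -[LHS]/(secant p v) -[RHS]/(secant p v0) vy v0y.
Qed.

Lemma card_secant_dom p : Q p = j -> (#|secant_dom p| <= #|F|.-1 * #|S|)%N.
Proof.
move=> Qp; apply: leq_trans (card_le_fibers (card_secant_fiber p)) _.
rewrite leq_mul2l; apply/orP; right; apply/subset_leq_card/subsetP => y.
by case/imsetP => v; rewrite !inE => /andP[Qv _] ->; rewrite qform_secant // Qp.
Qed.

(* Split [F^d] by the signs of [B p v] and [Q v]: the hyperplane [p^perp] has
   [N / q] points, the secant directions are at most [(q - 1) |S|] by the
   fiber count, and isotropic directions are rare by the line count along an
   anisotropic [u] orthogonal to [p]. *)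
Lemma card_sphere_lower : (N <= 3 * #|F| * #|S|)%N.
Proof.
have [p Qp] := qform_onto j d_ge2.
have Qp0 : Q p != 0 by rewrite Qp.
have p0 : p != 0 by apply: contraNneq Qp0 => ->; rewrite qform0.
have [u pu Qu] := exists_anisotropic_orthogonal d_ge2 Qp0.
set D := [set v | (B p v != 0)%R].
set Z := [set v | (B p v != 0) && (Q v == 0)].
have cardN : N = (#|D| + #|[set v | (B p v == 0)%R]|)%N.
  by rewrite -(cardsC D); congr (_ + _)%N; apply: eq_card => v; rewrite !inE negbK.
have cardD : #|D| = (#|secant_dom p| + #|Z|)%N.
  rewrite -(cardsID [set v | (Q v != 0)%R] D).
  by congr (_ + _)%N; apply: eq_card => v; rewrite !inE ?negbK andbC.
have cardH := card_bform_level 0 p0.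
have cardZ : (#|F| * #|Z| <= 2 * #|D|)%N.
  apply: (card_by_lines (u := u)) => [v | v t]; last first.
    by rewrite !inE bformDr bformZr pu mulr0 addr0 => /andP[].
  apply: leq_trans (card_line_level v 0 Qu); apply/subset_leq_card/subsetP => t.
  by rewrite !inE => /andP[].
rewrite cardN cardD; apply: sphere_count_arith (card_ge3 two_neq0) _ _ (card_secant_dom Qp).
  by rewrite cardH cardN cardD.
by rewrite -cardD.
Qed.

End NondegenerateForm.

Section AdditiveCharacter.

Variables (F : finFieldType) (chi : F -> algC).
Hypotheses (chi_add : additive_character chi) (chi_nontriv : nontrivial_character chi).

Lemma char_mulrn z k : chi (z *+ k) = chi z ^+ k.
Proof.
elim: k => [|k IHk]; first by rewrite mulr0n chi_add.2 expr0.
by rewrite mulrSr chi_add.1 IHk exprSr.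
Qed.

(* [chi z] is a [p]-th root of unity, [p] the characteristic of [F]. *)
Lemma norm_char z : `|chi z| = 1.
Proof.
have [p p_prime charFp] := finPcharP F.
have : `|chi z| ^+ p = 1 by rewrite -normrX -char_mulrn mulrn_pchar // chi_add.2 normr1.
by move/eqP; rewrite pexpr_eq1 ?prime_gt0 // => /eqP.
Qed.

Lemma conj_char z : (chi z)^* = chi (- z).
Proof.
have chiK : chi (- z) * chi z = 1 by rewrite -chi_add.1 addNr chi_add.2.
by rewrite -[LHS]mul1r -chiK -mulrA -normCK norm_char expr1n mulr1.
Qed.

Variable d : nat.
Local Notation N := #|{: 'rV[F]_d}|.

Lemma sum_char_dotv (c : 'rV[F]_d) :
  \sum_(m : 'rV[F]_d) chi (- dotv c m) = if c == 0 then N%:R else 0.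
Proof.
have [-> | c0] := eqVneq c 0.
  by rewrite (eq_bigr (fun=> 1)) ?sumr_const // => m _; rewrite dotv0l oppr0 chi_add.2.
have [x0 chi_x0] := chi_nontriv; have [i ci] := row_neq0P _ c0.
pose w : 'rV[F]_d := (- x0 / c 0 i) *: delta_mx 0 i.
have cw : dotv c w = - x0 by rewrite dotvZr dotv_delta mulfVK.
set s := \sum_m _; have : s = chi x0 * s.
  rewrite {1}/s (reindex_inj (addIr w)) /= mulr_sumr; apply: eq_bigr => m _.
  by rewrite dotvDr cw opprD opprK chi_add.1 mulrC.
by move/eqP; rewrite -subr_eq0 -{1}(mul1r s) -mulrBl mulf_eq0 subr_eq0 eq_sym (negbTE chi_x0) => /eqP.
Qed.

Lemma plancherel (h : 'rV[F]_d -> algC) :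
  \sum_(m : 'rV[F]_d) `|\sum_a chi (- dotv a m) * h a| ^+ 2 = N%:R * \sum_a `|h a| ^+ 2.
Proof.
under eq_bigr do rewrite normCK rmorph_sum big_distrlr /=.
rewrite exchange_big /= mulr_sumr; apply: eq_bigr => a _; rewrite exchange_big /=.
have inner b : \sum_(m : 'rV[F]_d) chi (- dotv a m) * h a * (chi (- dotv b m) * h b)^* =
    h a * (h b)^* * (if a - b == 0 then N%:R else 0).
  rewrite -sum_char_dotv mulr_sumr; apply: eq_bigr => m _.
  rewrite rmorphM /= conj_char opprK dotvDl dotvNl opprD opprK chi_add.1.
  by rewrite mulrACA mulrC.
under eq_bigr do rewrite inner.
rewrite (bigD1 a) //= subrr eqxx big1 ?addr0; first by rewrite normCK mulrC.
by move=> b ba; rewrite subr_eq0 eq_sym (negbTE ba) mulr0.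
Qed.

End AdditiveCharacter.

Lemma sum_pairs_by_sum (V : finZmodType) (R : nmodType) (S : {set V}) (phi : V -> V -> R) :
  \sum_(x in S) \sum_(y in S) phi x y = \sum_a \sum_(x in S | a - x \in S) phi x (a - x).
Proof.
under [RHS]eq_bigr do rewrite big_mkcondr /=.
rewrite [RHS]exchange_big /=; apply: eq_bigr => x _.
rewrite [RHS](reindex_inj (addIr x)) /= big_mkcond /=; apply: eq_bigr => y _.
by rewrite addrK.
Qed.

Lemma normr_mul_le_mean (R : numFieldType) (x y : R) :
  `|x| * `|y| <= (`|x| ^+ 2 + `|y| ^+ 2) / 2.
Proof.
rewrite ler_pdivlMr ?ltr0n // mulr_natr.
exact: (real_leif_mean_square_scaled (normr_real x) (normr_real y)).1.
Qed.

Lemma norm_sum_sqr_le (R : numFieldType) (I : finType) (P : {pred I}) (u : I -> R) :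
  `|\sum_(i in P) u i| ^+ 2 <= #|P|%:R * \sum_(i in P) `|u i| ^+ 2.
Proof.
have norm_ge0 : 0 <= \sum_(i in P) `|u i| by apply: sumr_ge0.
apply: le_trans (_ : (\sum_(i in P) `|u i|) ^+ 2 <= _).
  by rewrite ler_pXn2r ?nnegrE ?ler_norm_sum.
rewrite expr2 big_distrlr /=.
apply: le_trans (ler_sum _ (fun i _ => ler_sum _ (fun k _ => normr_mul_le_mean (u i) (u k)))) _.
have row_sum i : \sum_(k in P) (`|u i| ^+ 2 + `|u k| ^+ 2) / 2 =
    (`|u i| ^+ 2 *+ #|P| + \sum_(k in P) `|u k| ^+ 2) / 2.
  by rewrite -mulr_suml big_split /= sumr_const.
rewrite (eq_bigr _ (fun i _ => row_sum i)).
by rewrite -mulr_suml big_split /= sumr_const -sumrMnl mulrDl -splitr mulr_natl sumrMnl.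
Qed.

Section AutoConvolution.

Variables (F : finFieldType) (d : nat) (S : {set 'rV[F]_d}) (f : 'rV[F]_d -> algC).

Definition autoconv a := \sum_(x in S | a - x \in S) f x * f (a - x).

Definition autoconv_abs2 a := \sum_(x in S | a - x \in S) `|f x| ^+ 2 * `|f (a - x)| ^+ 2.

Local Notation mass := (\sum_(x in S) `|f x| ^+ 2).

Lemma sum_autoconv_abs2 : \sum_a autoconv_abs2 a = mass ^+ 2.
Proof.
rewrite expr2 big_distrlr /= (sum_pairs_by_sum S (fun x y => `|f x| ^+ 2 * `|f y| ^+ 2)).
by apply: eq_bigr => a _.
Qed.

Lemma autoconv_abs2_ge0 a : 0 <= autoconv_abs2 a.
Proof. by apply: sumr_ge0 => x _; rewrite mulr_ge0 ?exprn_ge0. Qed.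

Lemma norm_autoconv_sqr_le a :
  `|autoconv a| ^+ 2 <= #|[set x in S | a - x \in S]|%:R * autoconv_abs2 a.
Proof.
set P := [set x in S | a - x \in S].
have inP x : (x \in S) && (a - x \in S) = (x \in P) by rewrite inE.
rewrite /autoconv /autoconv_abs2 (eq_bigl _ _ inP) [X in _ <= _ * X](eq_bigl _ _ inP).
apply: le_trans (norm_sum_sqr_le _ _) _.
by rewrite le_eqVlt; apply/orP; left; apply/eqP; congr (_ * _); apply: eq_bigr => x _; rewrite normrM exprMn.
Qed.

Hypothesis symS : forall x, (- x \in S) = (x \in S).

Lemma norm_autoconv0_le : `|autoconv 0| <= mass.
Proof.
have inS x : (x \in S) && (0 - x \in S) = (x \in S) by rewrite sub0r symS andbb.
rewrite /autoconv (eq_bigl _ _ inS).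
apply: le_trans (ler_norm_sum _ _ _) _.
under eq_bigr do rewrite normrM sub0r.
apply: le_trans (ler_sum _ (fun x _ => normr_mul_le_mean (f x) (f (- x)))) _.
rewrite -mulr_suml big_split /=.
rewrite [X in (_ + X) / 2](reindex_inj (@oppr_inj _)) /=.
rewrite (eq_bigl _ _ symS).
by rewrite (eq_bigr _ (fun x _ => congr1 (fun y => `|f y| ^+ 2) (opprK x))) mulrDl -splitr.
Qed.

Lemma sum_norm_autoconv_sqr_le (K : algC) : 0 <= K ->
  (forall a, a != 0 -> #|[set x in S | a - x \in S]|%:R <= K) ->
  \sum_a `|autoconv a| ^+ 2 <= (1 + K) * mass ^+ 2.
Proof.
move=> K_ge0 pairs_le.
have mass_ge0 : 0 <= mass by apply: sumr_ge0 => x _; apply: exprn_ge0.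
rewrite (bigD1 0) //= mulrDl mul1r; apply: lerD.
  by rewrite ler_pXn2r ?nnegrE ?norm_autoconv0_le.
apply: le_trans (_ : \sum_(a | a != 0) K * autoconv_abs2 a <= _).
  apply: ler_sum => a a0; apply: le_trans (norm_autoconv_sqr_le a) _.
  by rewrite ler_wpM2r ?autoconv_abs2_ge0 ?pairs_le.
rewrite -mulr_sumr -sum_autoconv_abs2 ler_wpM2l // [X in _ <= X](bigD1 0) //=.
by rewrite lerDr autoconv_abs2_ge0.
Qed.

End AutoConvolution.

Section ExtensionOperator.

Variables (F : finFieldType) (d : nat) (chi : F -> algC).
Hypotheses (chi_add : additive_character chi) (chi_nontriv : nontrivial_character chi).
Variables (S : {set 'rV[F]_d}) (f : 'rV[F]_d -> algC).

Lemma ext_op_sqr m :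
  ext_op chi S f m ^+ 2 = (#|S|%:R ^+ 2)^-1 * \sum_a chi (- dotv a m) * autoconv S f a.
Proof.
rewrite /ext_op exprMn exprVn; congr (_ * _); rewrite expr2 big_distrlr /=.
rewrite (sum_pairs_by_sum S (fun x y => chi (- dotv x m) * f x * (chi (- dotv y m) * f y))).
apply: eq_bigr => a _; rewrite mulr_sumr; apply: eq_bigr => x _.
by rewrite mulrACA -chi_add.1 -opprD -dotvDl addrC subrK.
Qed.

Lemma sum_norm_ext_op4 : \sum_m `|ext_op chi S f m| ^+ 4 =
  (#|S|%:R ^+ 4)^-1 * #|{: 'rV[F]_d}|%:R * \sum_a `|autoconv S f a| ^+ 2.
Proof.
have norm4 m : `|ext_op chi S f m| ^+ 4 =
    (#|S|%:R ^+ 4)^-1 * `|\sum_a chi (- dotv a m) * autoconv S f a| ^+ 2.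
  rewrite -[4%N]/(2 * 2)%N exprM -normrX ext_op_sqr normrM exprMn normfV normrX.
  by rewrite ger0_norm ?ler0n // exprVn -exprM.
by rewrite (eq_bigr _ (fun m _ => norm4 m)) -mulr_sumr plancherel // mulrA.
Qed.

End ExtensionOperator.

Lemma count_factor_le (N q n : nat) : (3 <= q)%N -> (q ^ 2 <= N)%N -> (N <= 3 * q * n)%N ->
  N%:R * (1 + (2 * N)%:R / (q ^ 2)%:R) <= 27 * n%:R ^+ 2 :> algC.
Proof.
move=> q_ge3 N_ge N_le; have q2_gt0 : (0 < q ^ 2)%N by rewrite expn_gt0 (leq_trans _ q_ge3).
rewrite mulrDr mulr1 mulrA -natrM -[X in X + _](mulfK (_ : (q ^ 2)%:R != 0 :> algC)); last first.
  by rewrite pnatr_eq0 -lt0n.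
rewrite -mulrDl ler_pdivrMr ?ltr0n // -!natrM -natrD -natrX -!natrM ler_nat -mulnDr.
have := leq_mul N_le N_le; have := leq_mul (leqnn N) N_ge; rewrite !expnS !expn0; nia.
Qed.

Lemma sum_norm_ext_op4_le (F : finFieldType) d (chi : F -> algC) (A : 'M[F]_d) (j : F) f :
  additive_character chi -> nontrivial_character chi ->
  A^T = A -> A \in unitmx -> (2 : F) != 0 -> (2 <= d)%N -> j != 0 ->
  \sum_m `|ext_op chi (Sj A j) f m| ^+ 4 <=
  27 * ((#|Sj A j|%:R)^-1 * \sum_(x in Sj A j) `|f x| ^+ 2) ^+ 2.
Proof.
move=> chi_add chi_nontriv symA unitA two_neq0 d_ge2 j_neq0.
set S := Sj A j; set N := #|{: 'rV[F]_d}|; set q := #|F|; set n := #|S|.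
set mass := \sum_(x in S) _.
have q_ge3 : (3 <= q)%N := card_ge3 two_neq0.
have N_ge : (q ^ 2 <= N)%N.
  by rewrite /N card_mx mul1n; apply: leq_pexp2l; rewrite ?(leq_trans _ q_ge3).
have N_le : (N <= 3 * q * n)%N := card_sphere_lower symA unitA two_neq0 d_ge2 j_neq0.
have n0 : n%:R != 0 :> algC.
  by rewrite pnatr_eq0; move: (leq_trans N_ge N_le) q_ge3; rewrite expnS expn1; nia.
pose K : algC := (2 * N)%:R / (q ^ 2)%:R.
have pairs_le a : a != 0 -> #|[set x in S | a - x \in S]|%:R <= K.
  move=> a0; rewrite ler_pdivlMr ?ltr0n ?expn_gt0 ?(leq_trans _ q_ge3) //.
  by rewrite -natrM ler_nat mulnC card_sphere_pairs.
have symS x : (- x \in S) = (x \in S) by rewrite !inE qformN.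
have mass_ge0 : 0 <= mass by apply: sumr_ge0 => x _; apply: exprn_ge0.
rewrite sum_norm_ext_op4 //.
apply: le_trans (_ : (n%:R ^+ 4)^-1 * N%:R * ((1 + K) * mass ^+ 2) <= _).
  rewrite ler_wpM2l ?mulr_ge0 ?invr_ge0 ?exprn_ge0 ?ler0n //.
  by apply: sum_norm_autoconv_sqr_le; rewrite ?divr_ge0 ?ler0n.
rewrite (_ : _ * _ * _ = N%:R * (1 + K) * ((n%:R ^+ 4)^-1 * mass ^+ 2)); last by ring.
apply: le_trans (ler_wpM2r _ (count_factor_le q_ge3 N_ge N_le)) _.
  by rewrite mulr_ge0 ?invr_ge0 ?exprn_ge0 ?ler0n.
by rewrite le_eqVlt; apply/orP; left; apply/eqP; field.
Qed.

Theorem theorem1p2 :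
  forall d : nat, (2 <= d)%N ->
  exists C : algC, 0 <= C /\
  forall (F : finFieldType), ~~ (2%N \in [pchar F]) ->
  forall (chi : F -> algC), additive_character chi -> nontrivial_character chi ->
  forall (A : 'M[F]_d), nondeg_sym A ->
  forall (j : F), j != 0 ->
  forall (f : 'rV[F]_d -> algC),
    Lnorm_dm 4 (ext_op chi (Sj A j) f) <= C * Lnorm_ds 2 (Sj A j) f.
Proof.
move=> d d_ge2; exists 3; split=> [|F char_neq2 chi chi_add chi_nontriv A [symA unitA] j j0 f].
  by rewrite ler0n.
have two_neq0 : (2 : F) != 0 by apply: contra char_neq2 => two0; rewrite inE /= two0.
have := sum_norm_ext_op4_le f chi_add chi_nontriv symA unitA two_neq0 d_ge2 j0.
rewrite /Lnorm_dm /Lnorm_ds; set L2 := _ * \sum_(x in _) _; set L4 := \sum_m _ => L4_le.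
have L2_ge0 : 0 <= L2 by rewrite mulr_ge0 ?invr_ge0 ?ler0n ?sumr_ge0 // => x _; rewrite exprn_ge0.
rewrite -(ler_pXn2r (_ : 0 < 4)%N) ?nnegrE ?mulr_ge0 ?rootC_ge0 ?ler0n ?sumr_ge0 //; last first.
  by move=> m _; rewrite exprn_ge0.
rewrite rootCK // exprMn -[4%N]/(2 * 2)%N [X in _ <= _ * X]exprM rootCK //.
apply: le_trans L4_le _; rewrite ler_wpM2r ?exprn_ge0 //.
by rewrite -natrX ler_nat.
Qed.
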